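(* Work in a saturated structure. Let $G$ be a definable commutative group and $v:G\to I$ a definable function into a definable totally ordered set $I$ such that $v(a+b)\ge\min\{v(a),v(b)\}$ and $v(-a)=v(a)$ for all $a,b\in G$, and $v(0)$ is the maximum of $I$ with $v(a)=v(0)$ only for $a=0$. For $r\in I$ let $B_r=\{a\in G: v(a)\ge r\}$ and $B_r^-=\{a\in G: v(a)>r\}$. Suppose that every definable subset of $G$ is a Boolean combination of translates of sets of the form $B_r$, $B_r^-$ ($r\in I$), $\{0\}$ and $G$, and that $B_r/B_r^-$ is infinite for every $r\in I$ with $r<v(0)$. Then every type-definable subgroup of $G$ is a small intersection of definable subgroups, and every definable subgroup of $G$ is finite, or equal to $G$, or contains some $B_r$ or some $B_r^-$ as a subgroup of finite index.
   Context: Small means of cardinality less than the saturation of the ambient model; type-definable means a small intersection of definable sets; definable means definable with parameters. *)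

(* Abstract first-order setting:
   a structure is presented by its families of definable (with parameters)
   subsets of M^n, in the style of van den Dries. *)
From mathcomp Require Import all_boot.
Set Implicit Arguments. Unset Strict Implicit. Unset Printing Implicit Defensive.

Section Definability.
Variable M : Type.

Definition tup (n : nat) := 'I_n -> M.

Definition lpart {n m : nat} (z : tup (n + m)) : tup n := fun j => z (lshift m j).
Definition rpart {n m : nat} (z : tup (n + m)) : tup m := fun k => z (rshift n k).

(* The axioms
   below hold for the definable sets of any first-order structure, and
   conversely any such system is the collection of definable sets of the
   structure M expanded by all its members. *)
Record is_structure (Def : forall n, (tup n -> Prop) -> Prop) : Prop := {
  def_ext : forall n (A B : tup n -> Prop), (forall x, A x <-> B x) -> Def n A -> Def n B;
  def_T : forall n, Def n (fun _ => True);
  def_C : forall n A, Def n A -> Def n (fun x => ~ A x);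
  def_I : forall n A B, Def n A -> Def n B -> Def n (fun x => A x /\ B x);
  def_eq : forall n (i j : 'I_n), Def n (fun x => x i = x j);
  def_const : forall n (i : 'I_n) (a : M), Def n (fun x => x i = a);
  def_subst : forall n m (s : 'I_n -> 'I_m) A, Def n A -> Def m (fun y => A (fun i => y (s i)));
  def_proj : forall n m (A : tup (n + m) -> Prop), Def (n + m) A ->
     Def n (fun x => exists z : tup (n + m), lpart z = x /\ A z)
}.

Definition Def2 (Def : forall n, (tup n -> Prop) -> Prop) n m
  (R : tup n -> tup m -> Prop) : Prop :=
  Def (n + m) (fun z => R (lpart z) (rpart z)).

Definition Def3 (Def : forall n, (tup n -> Prop) -> Prop) n m k
  (R : tup n -> tup m -> tup k -> Prop) : Prop :=
  Def (n + m + k) (fun z => R (lpart (lpart z)) (rpart (lpart z)) (rpart z)).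

End Definability.

(* Cardinals: the saturation cardinal kappa is represented by a type K.
   A type J is small iff |J| < |K|, i.e. there is no injection K -> J. *)
Definition small (K J : Type) : Prop := ~ exists f : K -> J, injective f.

Definition uncountable (K : Type) : Prop := ~ exists f : K -> nat, injective f.

Definition saturated (K M : Type) (Def : forall n, (tup M n -> Prop) -> Prop) : Prop :=
  forall n (J : Type) (F : J -> tup M n -> Prop),
    small K J -> (forall j, Def n (F j)) ->
    (forall (N : nat) (f : 'I_N -> J), exists x, forall i, F (f i) x) ->
    exists x, forall j, F j x.

Definition type_definable (K M : Type) (Def : forall n, (tup M n -> Prop) -> Prop)
  n (H : tup M n -> Prop) : Prop :=
  exists (J : Type) (D : J -> tup M n -> Prop),
    small K J /\ (forall j, Def n (D j)) /\ (forall x, H x <-> forall j, D j x).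

Record is_comm_group (X : Type) (G : X -> Prop) (add : X -> X -> X) (opp : X -> X)
  (zero : X) : Prop := {
  grp_zero : G zero;
  grp_add : forall a b, G a -> G b -> G (add a b);
  grp_opp : forall a, G a -> G (opp a);
  grp_assoc : forall a b c, G a -> G b -> G c -> add a (add b c) = add (add a b) c;
  grp_comm : forall a b, G a -> G b -> add a b = add b a;
  grp_0 : forall a, G a -> add zero a = a;
  grp_N : forall a, G a -> add (opp a) a = zero
}.

Definition subgroup (X : Type) (G : X -> Prop) (add : X -> X -> X) (opp : X -> X)
  (zero : X) (H : X -> Prop) : Prop :=
  (forall x, H x -> G x) /\ H zero /\ (forall a b, H a -> H b -> H (add a b)) /\
  (forall a, H a -> H (opp a)).

Record is_total_order (Y : Type) (I : Y -> Prop) (le : Y -> Y -> Prop) : Prop := {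
  le_refl : forall r, I r -> le r r;
  le_anti : forall r s, I r -> I s -> le r s -> le s r -> r = s;
  le_trans : forall r s t, I r -> I s -> I t -> le r s -> le s t -> le r t;
  le_total : forall r s, I r -> I s -> le r s \/ le s r
}.

Definition lt_of (Y : Type) (le : Y -> Y -> Prop) (r s : Y) : Prop := le r s /\ r <> s.

Definition ball (X Y : Type) (G : X -> Prop) (le : Y -> Y -> Prop) (v : X -> Y) (r : Y)
  : X -> Prop := fun a => G a /\ le r (v a).
Definition oball (X Y : Type) (G : X -> Prop) (le : Y -> Y -> Prop) (v : X -> Y) (r : Y)
  : X -> Prop := fun a => G a /\ lt_of le r (v a).

Definition translate (X : Type) (add : X -> X -> X) (g : X) (S : X -> Prop) : X -> Prop :=
  fun x => exists s, S s /\ x = add g s.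

Inductive bcomb (X Y : Type) (G : X -> Prop) (add : X -> X -> X) (zero : X)
  (I : Y -> Prop) (le : Y -> Y -> Prop) (v : X -> Y) : (X -> Prop) -> Prop :=
| bc_ball g r : G g -> I r -> bcomb G add zero I le v (translate add g (ball G le v r))
| bc_oball g r : G g -> I r -> bcomb G add zero I le v (translate add g (oball G le v r))
| bc_zero g : G g -> bcomb G add zero I le v (translate add g (fun x => x = zero))
| bc_G g : G g -> bcomb G add zero I le v (translate add g G)
| bc_compl A : bcomb G add zero I le v A -> bcomb G add zero I le v (fun x => G x /\ ~ A x)
| bc_union A B : bcomb G add zero I le v A -> bcomb G add zero I le v B ->
    bcomb G add zero I le v (fun x => A x \/ B x)
| bc_inter A B : bcomb G add zero I le v A -> bcomb G add zero I le v B ->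
    bcomb G add zero I le v (fun x => A x /\ B x)
| bc_ext A B : bcomb G add zero I le v A -> (forall x, A x <-> B x) ->
    bcomb G add zero I le v B.

Definition finite_pred (X : Type) (H : X -> Prop) : Prop :=
  exists (N : nat) (c : 'I_N -> X), forall x, H x -> exists i, x = c i.

Definition finite_index (X : Type) (add : X -> X -> X) (opp : X -> X)
  (H L : X -> Prop) : Prop :=
  exists (N : nat) (c : 'I_N -> X), (forall i, H (c i)) /\
    forall h, H h -> exists i, L (add h (opp (c i))).

From mathcomp Require Import all_boot.
From Stdlib Require Import Classical ClassicalEpsilon FunctionalExtensionality.
From Stdlib Require List.
Set Implicit Arguments. Unset Strict Implicit. Unset Printing Implicit Defensive.

(* Every definable subset of G is a Boolean combination of cosets of balls.  Hence inside a
   coset of B_r, a definable set E or its complement is covered by finitely many cosets of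
   B_r^-, and inside a coset of B_r^- it is covered by finitely many cosets of some ball B_t,
   with r < t and t in a finite list of radii depending only on E.  A Neumann-type argument
   shows that if the complement of E in a coset of a subgroup Y is covered by finitely many
   translates of a set Z while Y itself is not, then Y is contained in E - E; as B_r^- has
   infinite index in B_r this applies at every step.  Climbing through the finitely many radii
   of E, any subgroup H of E is thus covered by finitely many cosets of a ball Y (G, B_r or
   B_r^-) with Y contained in E - E.  For definable H take E = H.  For H = /\ D_j
   type-definable, compactness gives a definable E containing H with E + E - E inside D_j,
   and then H + Y is a definable subgroup between H and D_j. *)

Definition asbool (P : Prop) : bool := if excluded_middle_informative P then true else false.

Lemma asboolP (P : Prop) : reflect P (asbool P).
Proof. by rewrite /asbool; case: excluded_middle_informative => h; constructor. Qed.

Lemma has_In (S : Type) (a : pred S) s x : List.In x s -> a x -> has a s.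
Proof. by elim: s => //= y s IH [-> -> // | /IH h /h ->]; rewrite orbT. Qed.

Lemma count_lt_subpred (S : Type) (a1 a2 : pred S) s :
  subpred a1 a2 -> has (predD a2 a1) s -> (count a1 s < count a2 s)%N.
Proof.
move=> sub12; elim: s => //= x s IH /orP [/andP [/negbTE -> ->] | /IH].
  by rewrite ltnS; apply: sub_count.
case a1x: (a1 x); first by rewrite (sub12 _ a1x) ltn_add2l.
by move=> /leq_trans; apply; apply: leq_addl.
Qed.

Section CommGroup.
Variables (X : Type) (G : X -> Prop) (add : X -> X -> X) (opp : X -> X) (zero : X).
Hypothesis hG : is_comm_group G add opp zero.

Definition subg (a b : X) := add a (opp b).

Lemma G0 : G zero. Proof. exact: (grp_zero hG). Qed.
Lemma GD a b : G a -> G b -> G (add a b). Proof. exact: (grp_add hG). Qed.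
Lemma GN a : G a -> G (opp a). Proof. exact: (grp_opp hG). Qed.
Lemma GB a b : G a -> G b -> G (subg a b). Proof. by move=> ha hb; exact: GD ha (GN hb). Qed.

Ltac grp_mem := repeat first [assumption | apply: G0 | apply: GB | apply: GD | apply: GN].

Lemma addgA a b c : G a -> G b -> G c -> add a (add b c) = add (add a b) c.
Proof. exact: (grp_assoc hG). Qed.
Lemma addgC a b : G a -> G b -> add a b = add b a. Proof. exact: (grp_comm hG). Qed.
Lemma add0g a : G a -> add zero a = a. Proof. exact: (grp_0 hG). Qed.
Lemma addg0 a : G a -> add a zero = a.
Proof. by move=> ha; rewrite addgC ?add0g //; grp_mem. Qed.
Lemma addNg a : G a -> add (opp a) a = zero. Proof. exact: (grp_N hG). Qed.
Lemma addgN a : G a -> add a (opp a) = zero.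
Proof. by move=> ha; rewrite addgC ?addNg //; grp_mem. Qed.
Lemma addKg a b : G a -> G b -> add (opp a) (add a b) = b.
Proof. by move=> ha hb; rewrite addgA ?addNg ?add0g //; grp_mem. Qed.
Lemma addgI a b c : G a -> G b -> G c -> add a b = add a c -> b = c.
Proof. by move=> ha hb hc e; rewrite -(addKg ha hb) e addKg. Qed.
Lemma oppgK a : G a -> opp (opp a) = a.
Proof. by move=> ha; apply: (@addgI (opp a)); grp_mem; rewrite addgN ?addNg //; grp_mem. Qed.
Lemma oppg0 : opp zero = zero.
Proof. by apply: (@addgI zero); grp_mem; rewrite addgN ?add0g //; grp_mem. Qed.
Lemma oppgD a b : G a -> G b -> opp (add a b) = add (opp a) (opp b).
Proof.
move=> ha hb; apply: (@addgI (add a b)); grp_mem.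
rewrite addgN; grp_mem; rewrite [add (opp a) _]addgC; grp_mem.
by rewrite addgA -?[add (add a b) (opp b)]addgA ?addgN ?addg0 ?addgN //; grp_mem.
Qed.
Lemma oppgB a b : G a -> G b -> opp (subg a b) = subg b a.
Proof. by move=> ha hb; rewrite /subg oppgD ?oppgK ?[add (opp a) _]addgC //; grp_mem. Qed.
Lemma subgg a : G a -> subg a a = zero. Proof. exact: addgN. Qed.
Lemma subg0 a : G a -> subg a zero = a. Proof. by move=> ha; rewrite /subg oppg0 addg0. Qed.
Lemma subg_addl a b : G a -> G b -> subg (add a b) a = b.
Proof. by move=> ha hb; rewrite /subg addgC ?addKg //; grp_mem. Qed.
Lemma subg_addr a b : G a -> G b -> subg (add a b) b = a.
Proof. by move=> ha hb; rewrite addgC // subg_addl. Qed.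
Lemma addg_subK a b : G a -> G b -> add b (subg a b) = a.
Proof.
by move=> ha hb; rewrite /subg addgC -?addgA ?addNg ?addg0 //; grp_mem.
Qed.
Lemma subg_chain a b c : G a -> G b -> G c -> subg a c = add (subg a b) (subg b c).
Proof. by move=> ha hb hc; rewrite /subg -addgA ?addKg //; grp_mem. Qed.
Lemma subgB x b d : G x -> G b -> G d -> subg x (subg b d) = subg (add d x) b.
Proof.
move=> hx hb hd; rewrite /subg -/(subg b d) oppgB // /subg addgA; grp_mem.
by rewrite (addgC hx hd).
Qed.
Lemma subgBD a c e : G a -> G c -> G e -> subg (subg a c) e = subg a (add c e).
Proof. by move=> ha hc he; rewrite /subg oppgD // addgA; grp_mem. Qed.
Lemma addgACA a b c d : G a -> G b -> G c -> G d ->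
  add (add a b) (add c d) = add (add a c) (add b d).
Proof.
move=> ha hb hc hd; rewrite -addgA; grp_mem; rewrite [add b _]addgA // (addgC hb hc).
by rewrite -addgA ?addgA //; grp_mem.
Qed.

Local Notation sgrp := (subgroup G add opp zero).

Lemma sgrpG : sgrp G.
Proof. by do !split=> //; [exact: G0 | exact: GD | exact: GN]. Qed.

Section Subgroup.
Variables (H : X -> Prop).
Hypothesis hH : sgrp H.

Lemma sgrp_sub a : H a -> G a. Proof. by case: hH => h _; apply: h. Qed.
Lemma sgrp0 : H zero. Proof. by case: hH => _ []. Qed.
Lemma sgrpD a b : H a -> H b -> H (add a b). Proof. by case: hH => _ [_ [h _]]; apply: h. Qed.
Lemma sgrpN a : H a -> H (opp a). Proof. by case: hH => _ [_ [_ h]]; apply: h. Qed.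
Lemma sgrpB a b : H a -> H b -> H (subg a b).
Proof. by move=> ha hb; apply: sgrpD => //; apply: sgrpN. Qed.
Lemma sgrp_chain a b c : G a -> G b -> G c -> H (subg a b) -> H (subg b c) -> H (subg a c).
Proof. by move=> ha hb hc h1 h2; rewrite (subg_chain ha hb hc); apply: sgrpD. Qed.
Lemma sgrp_sym a b : G a -> G b -> H (subg a b) -> H (subg b a).
Proof. by move=> ha hb h; rewrite -oppgB //; apply: sgrpN. Qed.
End Subgroup.

Lemma translateE g (S : X -> Prop) a : G g -> (forall s, S s -> G s) ->
  translate add g S a <-> G a /\ S (subg a g).
Proof.
move=> hg hS; split.
  by case=> s [hs ->]; have gs := hS _ hs; split; [grp_mem | rewrite subg_addl].
by case=> ha hs; exists (subg a g); rewrite addg_subK.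
Qed.

Definition coset (d : X) (Y : X -> Prop) : X -> Prop := fun a => G a /\ Y (subg a d).

Definition covered (Y A : X -> Prop) := exists l : list X,
  (forall c, List.In c l -> G c) /\ forall x, A x -> exists c, List.In c l /\ Y (subg x c).

Definition covered_in (H Y : X -> Prop) := exists l : list X,
  (forall c, List.In c l -> H c) /\ forall x, H x -> exists c, List.In c l /\ Y (subg x c).


Lemma covered_mono (Y Y' A A' : X -> Prop) : (forall x, Y x -> Y' x) ->
  (forall x, A' x -> A x) -> covered Y A -> covered Y' A'.
Proof.
move=> hY hA [l [hl hc]]; exists l; split=> // x /hA /hc [c [hin hy]].
by exists c; split=> //; apply: hY.
Qed.

Lemma covered_union (Y A A' : X -> Prop) :
  covered Y A -> covered Y A' -> covered Y (fun x => A x \/ A' x).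
Proof.
move=> [l1 [hl1 hc1]] [l2 [hl2 hc2]]; exists (l1 ++ l2)%list; split.
  by move=> c /List.in_app_iff [] ?; [apply: hl1 | apply: hl2].
move=> x [/hc1 | /hc2] [c [hin hy]]; exists c; split=> //; apply/List.in_app_iff; tauto.
Qed.

Lemma covered_coset (Y Xs : X -> Prop) c : G c -> covered Y Xs -> covered Y (coset c Xs).
Proof.
move=> gc [l [hl hcov]]; exists (List.map (add c) l); split.
  by move=> e /List.in_map_iff [e' [<- /hl ?]]; grp_mem.
move=> a [ga /hcov [e [hin hy]]]; have ge := hl _ hin.
by exists (add c e); split; [apply/List.in_map_iff; exists e | rewrite -subgBD].
Qed.

Lemma covered_in_of_covered (H Y : X -> Prop) : (forall x, H x -> G x) -> sgrp Y ->
  covered Y H -> covered_in H Y.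
Proof.
move=> + hY [l []]; elim: l H => [|c l IH] H hHG hl hc.
  by exists nil; split=> // h /hc [c [[]]].
have gc : G c by apply: hl; left.
have [l' [hl' hc']] : covered_in (fun x => H x /\ ~ Y (subg x c)) Y.
  apply: IH => [x [/hHG] // | c' hc'|h [hh hn]]; first by apply: hl; right.
  by case: (hc _ hh) => c' [[<- | hin] hy]; [case: hn | exists c'].
have cover_rest h : H h -> ~ Y (subg h c) -> exists c', List.In c' l' /\ Y (subg h c').
  by move=> hh hn; apply: hc'.
case: (classic (exists h0, H h0 /\ Y (subg h0 c))) => [[h0 [hh0 hy0]] | hno].
  exists (h0 :: l'); split=> [x [<- | /hl' []] // | h hh].
  case: (classic (Y (subg h c))) => hy; last first.
    by case: (cover_rest _ hh hy) => c' [hin hy']; exists c'; split=> //; right.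
  exists h0; split; first by left.
  have gh := hHG _ hh; have gh0 := hHG _ hh0.
  by apply: (sgrp_chain hY _ gc) => //; apply: sgrp_sym.
exists l'; split=> [x /hl' [] // | h hh].
by apply: cover_rest => // hy; apply: hno; exists h.
Qed.

Lemma finite_index_of_covered_in (H Y : X -> Prop) :
  covered_in H Y -> finite_index add opp H Y.
Proof.
move=> [l [hl hc]]; exists (length l), (fun i => List.nth i l zero); split.
  by move=> i; apply/hl/List.nth_In/ltP.
move=> h /hc [c [hin hy]]; case: (List.In_nth _ _ zero hin) => k [/ltP hk e].
by exists (Ordinal hk); rewrite /= e.
Qed.

Definition diffset (E : X -> Prop) : X -> Prop :=
  fun x => exists e1 e2, E e1 /\ E e2 /\ x = subg e1 e2.

Lemma sgrp_diffset (H : X -> Prop) x : sgrp H -> diffset H x -> H x.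
Proof. by move=> hH [e1 [e2 [h1 [h2 ->]]]]; apply: sgrpB. Qed.

Lemma diffset_of_not_covered (Xs Ys E : X -> Prop) d : sgrp Xs -> G d ->
  covered Ys (fun a => coset d Xs a /\ ~ E a) -> ~ covered Ys Xs ->
  forall x, Xs x -> diffset E x.
Proof.
move=> hX hd [lb [hlb hbad]] hnc x hx; apply: NNPP => hn; apply: hnc.
have gx := sgrp_sub hX hx.
(* As x is not in E - E, for y in Xs the points d + y and d + y + x of d + Xs are not both
   in E; one of them lies in some b + Ys, so y lies in (b - d) + Ys or in (b - d - x) + Ys. *)
exists (List.map (fun b => subg b d) lb ++ List.map (fun b => subg (subg b d) x) lb)%list.
split.
  by move=> c /List.in_app_iff [] /List.in_map_iff [b [<- /hlb hb]]; grp_mem.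
move=> y hy; have gy := sgrp_sub hX hy.
have ga1 : G (add d y) by grp_mem.
have ga2 : G (add (add d y) x) by grp_mem.
have in1 : coset d Xs (add d y) by split; rewrite ?subg_addl.
have in2 : coset d Xs (add (add d y) x).
  by split=> //; rewrite -addgA ?subg_addl //; grp_mem; apply: sgrpD.
case: (classic (E (add d y))) => e1; [case: (classic (E (add (add d y) x))) => e2 |].
- by case: hn; exists (add (add d y) x), (add d y); rewrite subg_addl.
- case: (hbad _ (conj in2 e2)) => b [hb hyb]; have gb := hlb _ hb.
  exists (subg (subg b d) x); split.
    by apply/List.in_app_iff; right; apply/List.in_map_iff; exists b.
  rewrite subgB; grp_mem; rewrite subgB; grp_mem.
  by rewrite (addgC gx gy) addgA.
- case: (hbad _ (conj in1 e1)) => b [hb hyb]; have gb := hlb _ hb.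
  exists (subg b d); split; last by rewrite subgB.
  by apply/List.in_app_iff; left; apply/List.in_map_iff; exists b.
Qed.

Definition sumset (H Y : X -> Prop) : X -> Prop :=
  fun x => exists h y, H h /\ Y y /\ x = add h y.

Lemma sgrp_sumset (H Y : X -> Prop) : sgrp H -> sgrp Y -> sgrp (sumset H Y).
Proof.
move=> hH hY; have HG := sgrp_sub hH; have YG := sgrp_sub hY.
split=> [x [h [y [/HG ? [/YG ? ->]]]] | ]; first by grp_mem.
split.
  exists zero, zero; rewrite add0g; last by grp_mem.
  by split; [exact: (sgrp0 hH) | split; [exact: (sgrp0 hY) |]].
split=> [x1 x2 [h1 [y1 [hh1 [hy1 ->]]]] [h2 [y2 [hh2 [hy2 ->]]]] |
         x [h [y [hh [hy ->]]]]].
  exists (add h1 h2), (add y1 y2); split; first exact: sgrpD.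
  split; first exact: sgrpD.
  by rewrite addgACA //; [apply: HG | apply: YG | apply: HG | apply: YG].
exists (opp h), (opp y); split; first exact: (sgrpN hH hh).
by split; [exact: (sgrpN hY hy) | rewrite oppgD //; [apply: HG | apply: YG]].
Qed.

Lemma sumset_covered_in (H Y : X -> Prop) : sgrp H -> sgrp Y -> covered_in H Y ->
  exists l, (forall c, List.In c l -> G c) /\
    forall x, sumset H Y x <-> exists c, List.In c l /\ coset c Y x.
Proof.
move=> hH hY [l [hl hc]]; have HG := sgrp_sub hH; have YG := sgrp_sub hY.
exists l; split=> [c /hl /HG // | x]; split.
  move=> [h [y [hh [hy ->]]]]; case: (hc _ hh) => c [hin hyc].
  have gc := HG _ (hl _ hin); have gh := HG _ hh; have gy := YG _ hy.
  exists c; split=> //; split; grp_mem.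
  rewrite (subg_chain _ (b := h)); grp_mem; rewrite subg_addl //.
  by rewrite addgC; grp_mem; apply: sgrpD.
move=> [c [hin [gx hy]]]; exists c, (subg x c); split; first exact: hl.
by split=> //; rewrite addg_subK //; apply/HG/hl.
Qed.

Definition compl (A : X -> Prop) : X -> Prop := fun a => G a /\ ~ A a.

Section Dichotomy.
Variables (T : Type) (idx : T -> Prop) (Y : T -> X -> Prop).

Definition coset_small (S : X -> Prop) := exists t, idx t /\ covered (Y t) S.

Definition dichotomy (P A : X -> Prop) :=
  coset_small (fun a => P a /\ A a) \/ coset_small (fun a => P a /\ compl A a).

Definition directed := forall t1 t2, idx t1 -> idx t2 -> exists t3, idx t3 /\
  (forall x, Y t1 x -> Y t3 x) /\ (forall x, Y t2 x -> Y t3 x).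

Lemma coset_small_mono (S S' : X -> Prop) :
  (forall x, S' x -> S x) -> coset_small S -> coset_small S'.
Proof. by move=> h [t [ht hc]]; exists t; split=> //; apply: covered_mono hc. Qed.

Lemma coset_small_union (S S' : X -> Prop) : directed ->
  coset_small S -> coset_small S' -> coset_small (fun x => S x \/ S' x).
Proof.
move=> hdir [t1 [ht1 hc1]] [t2 [ht2 hc2]]; case: (hdir _ _ ht1 ht2) => t [ht [h1 h2]].
by exists t; split=> //; apply: covered_union; [apply: covered_mono hc1 | apply: covered_mono hc2].
Qed.

Lemma coset_small_bigunion (S : X -> X -> Prop) l : directed -> (exists t, idx t) ->
  (forall c, List.In c l -> coset_small (S c)) ->
  coset_small (fun x => exists c, List.In c l /\ S c x).
Proof.
move=> hdir [t0 ht0]; elim: l => [|c l IH] hl.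
  by exists t0; split=> //; exists nil; split=> // x [c [[]]].
have := coset_small_union hdir (hl c (or_introl erefl)) (IH (fun c' h => hl c' (or_intror h))).
apply: coset_small_mono.
by move=> x [c' [[<- | hin] hx]]; [left | right; exists c'].
Qed.

Lemma dichotomy_ext (P A A' : X -> Prop) : (forall x, A x <-> A' x) ->
  dichotomy P A -> dichotomy P A'.
Proof.
move=> hA [] hs; [left | right]; apply: coset_small_mono hs => x [hp hx]; split=> //.
  by apply/hA.
by case: hx => gx hn; split=> // /hA.
Qed.

Lemma dichotomy_compl (P A : X -> Prop) : dichotomy P A -> dichotomy P (compl A).
Proof.
move=> [] hs; [right | left]; apply: coset_small_mono hs => x [hp [gx hn]]; split=> //.
by apply: NNPP => hA; apply: hn.
Qed.

Lemma dichotomy_union (P A A' : X -> Prop) : directed ->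
  dichotomy P A -> dichotomy P A' -> dichotomy P (fun x => A x \/ A' x).
Proof.
rewrite /compl => hdir [] h1 [] h2.
- by left; apply: coset_small_mono (coset_small_union hdir h1 h2) => x [hp [] ?]; [left | right].
- by right; apply: coset_small_mono h2 => x [hp [gx hn]]; do !split=> //; tauto.
- by right; apply: coset_small_mono h1 => x [hp [gx hn]]; do !split=> //; tauto.
- by right; apply: coset_small_mono h1 => x [hp [gx hn]]; do !split=> //; tauto.
Qed.

Lemma dichotomy_inter (P A A' : X -> Prop) : directed ->
  dichotomy P A -> dichotomy P A' -> dichotomy P (fun x => A x /\ A' x).
Proof.
rewrite /compl => hdir [] h1 [] h2.
- by left; apply: coset_small_mono h1 => x [hp []].
- by left; apply: coset_small_mono h1 => x [hp []].
- by left; apply: coset_small_mono h2 => x [hp []].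
right; apply: coset_small_mono (coset_small_union hdir h1 h2) => x [hp [gx hn]].
by case: (classic (A x)) => hA; [right | left]; do !split=> //; tauto.
Qed.

Lemma dichotomy_const (c : Prop) (P A : X -> Prop) : (exists t, idx t) ->
  (forall a, P a -> (A a <-> c)) -> dichotomy P A.
Proof.
move=> [t ht] hc; case: (classic c) => c_true; [right | left]; exists t; split=> //;
  exists nil; split=> // a [hp ha]; exfalso.
  by case: ha => _; apply; apply/(hc _ hp).
by apply: c_true; apply/(hc _ hp).
Qed.

Lemma dichotomy_translate_sub s (P Z : X -> Prop) g : idx s -> G g ->
  (forall x, Z x -> G x) -> (forall x, Z x -> Y s x) -> dichotomy P (translate add g Z).
Proof.
move=> hs hg hZG hZY; left; exists s; split=> //; exists [:: g]; split=> [c [<-|[]] // | a].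
by case=> _ /(translateE _ hg hZG) [_ /hZY hy]; exists g; split=> //; left.
Qed.

Lemma dichotomy_translate_super (Xs Z : X -> Prop) d g : (exists t, idx t) -> sgrp Z ->
  (forall x, Xs x -> Z x) -> G d -> G g -> dichotomy (coset d Xs) (translate add g Z).
Proof.
move=> hidx hZ hXZ hd hg; apply: (dichotomy_const (c := Z (subg d g))) => // a [ga hx].
rewrite translateE //; last exact: sgrp_sub.
split=> [[_ hz] | hz]; last by split=> //; apply: (sgrp_chain hZ ga hd hg) => //; apply: hXZ.
by apply: (sgrp_chain hZ hd ga hg) => //; apply: sgrp_sym => //; apply: hXZ.
Qed.
End Dichotomy.

Arguments dichotomy_const [T idx Y] c [P A].

Lemma coset_small_idx T (idx idx' : T -> Prop) Y S : (forall t, idx t -> idx' t) ->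
  coset_small idx Y S -> coset_small idx' Y S.
Proof. by move=> h [t [ht hc]]; exists t; split=> //; apply: h. Qed.

Lemma dichotomy_idx T (idx idx' : T -> Prop) Y P A : (forall t, idx t -> idx' t) ->
  dichotomy idx Y P A -> dichotomy idx' Y P A.
Proof. by move=> h [] hs; [left | right]; apply: coset_small_idx hs. Qed.

Section Valuation.
Variables (T : Type) (I : T -> Prop) (le : T -> T -> Prop) (v : X -> T).
Hypothesis hI : is_total_order I le.
Hypothesis hvI : forall a, G a -> I (v a).
Hypothesis hvadd : forall a b, G a -> G b -> le (v a) (v (add a b)) \/ le (v b) (v (add a b)).
Hypothesis hvopp : forall a, G a -> v (opp a) = v a.
Hypothesis hvmax : forall a, G a -> le (v a) (v zero).
Hypothesis hv0 : forall a, G a -> v a = v zero -> a = zero.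

Local Notation lt := (lt_of le).
Local Notation v0 := (v zero).
Local Notation B := (ball G le v).
Local Notation OB := (oball G le v).

Lemma Iv0 : I v0. Proof. exact/hvI/G0. Qed.

Lemma ltW r s : lt r s -> le r s. Proof. by case. Qed.

Lemma lt_le_trans r s t : I r -> I s -> I t -> lt r s -> le s t -> lt r t.
Proof.
move=> hr hs ht [h1 h2] h3; split; first exact: (le_trans hI) h1 h3.
by move=> e; subst t; apply: h2; apply: (le_anti hI).
Qed.

Lemma le_lt_trans r s t : I r -> I s -> I t -> le r s -> lt s t -> lt r t.
Proof.
move=> hr hs ht h1 [h2 h3]; split; first exact: (le_trans hI) h1 h2.
by move=> e; subst t; apply: h3; apply: (le_anti hI).
Qed.

Lemma le_or_lt r s : I r -> I s -> le r s \/ lt s r.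
Proof.
move=> hr hs; case: (le_total hI hr hs) => h; first by left.
by case: (classic (s = r)) => [-> | ne]; [left; apply: (le_refl hI) | right].
Qed.

Lemma ballG r a : B r a -> G a. Proof. by case. Qed.
Lemma oballG r a : OB r a -> G a. Proof. by case. Qed.
Lemma oball_ball r a : OB r a -> B r a. Proof. by case=> ga [h _]. Qed.

Lemma ball_mono r s a : I r -> I s -> le r s -> B s a -> B r a.
Proof. by move=> hr hs h [ga h2]; split=> //; apply: (le_trans hI) h h2 => //; apply: hvI. Qed.

Lemma oball_mono r s a : I r -> I s -> le r s -> OB s a -> OB r a.
Proof. by move=> hr hs h [ga h2]; split=> //; apply: le_lt_trans h h2 => //; apply: hvI. Qed.

Lemma ball_oball r s a : I r -> I s -> lt r s -> B s a -> OB r a.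
Proof. by move=> hr hs h [ga h2]; split=> //; apply: lt_le_trans h h2 => //; apply: hvI. Qed.

Lemma ball_le_v0 r a : I r -> B r a -> le r v0.
Proof. by move=> hr [ga h]; apply: (le_trans hI) h (hvmax ga) => //; [apply: hvI | apply: Iv0]. Qed.

Lemma oball_lt_v0 r a : I r -> OB r a -> lt r v0.
Proof. by move=> hr [ga h]; apply: lt_le_trans h (hvmax ga) => //; [apply: hvI | apply: Iv0]. Qed.

Lemma ball_v0 r a : I r -> le v0 r -> B r a -> a = zero.
Proof.
move=> hr h [ga h2]; have Iva := hvI ga; apply: hv0 => //.
apply: (le_anti hI) (hvmax ga) _ => //; first exact: Iv0.
by apply: (le_trans hI) h h2 => //; apply: Iv0.
Qed.

Lemma ball_sgrp r : I r -> le r v0 -> subgroup G add opp zero (B r).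
Proof.
move=> hr hr0; split; first exact: ballG.
split; first by split; [exact: G0 | ].
split=> [a b [ga ha] [gb hb] | a [ga ha]]; last by split; [exact: GN | rewrite hvopp].
split; first exact: GD.
have Iab := hvI (GD ga gb).
by case: (hvadd ga gb) => h; [apply: (le_trans hI) ha h | apply: (le_trans hI) hb h];
  rewrite //; apply: hvI.
Qed.

Lemma oball_sgrp r : I r -> lt r v0 -> subgroup G add opp zero (OB r).
Proof.
move=> hr hr0; split; first exact: oballG.
split; first by split; [exact: G0 | ].
split=> [a b [ga ha] [gb hb] | a [ga ha]]; last by split; [exact: GN | rewrite hvopp].
split; first exact: GD.
have Iab := hvI (GD ga gb).
by case: (hvadd ga gb) => h; [apply: lt_le_trans ha h | apply: lt_le_trans hb h];
  rewrite //; apply: hvI.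
Qed.

Section BooleanCombinations.
Variables (P : X -> Prop) (R : Type) (idx : R -> Prop) (Y : R -> X -> Prop).
Hypothesis hdir : directed idx Y.
Hypothesis dich_ball : forall g r, G g -> I r -> dichotomy idx Y P (translate add g (B r)).
Hypothesis dich_oball : forall g r, G g -> I r -> dichotomy idx Y P (translate add g (OB r)).
Hypothesis dich_zero : forall g, G g -> dichotomy idx Y P (translate add g (fun x => x = zero)).
Hypothesis dich_G : forall g, G g -> dichotomy idx Y P (translate add g G).

Lemma bcomb_dichotomy D : bcomb G add zero I le v D -> dichotomy idx Y P D.
Proof.
elim=> {D}.
- exact: dich_ball.
- exact: dich_oball.
- exact: dich_zero.
- exact: dich_G.
- by move=> A _; apply: dichotomy_compl.
- by move=> A A' _ h1 _ h2; apply: dichotomy_union.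
- by move=> A A' _ h1 _ h2; apply: dichotomy_inter.
- by move=> A A' _ h e; apply: dichotomy_ext h.
Qed.
End BooleanCombinations.

Lemma ball_directed (idx : T -> Prop) : (forall t, idx t -> I t) -> directed idx B.
Proof.
move=> hidx t1 t2 ht1 ht2; have h1 := hidx _ ht1; have h2 := hidx _ ht2.
case: (le_total hI h1 h2) => h; [exists t1 | exists t2]; split=> //;
  by split=> x hx //; apply: ball_mono hx.
Qed.

Lemma bcomb_dichotomy_G D : bcomb G add zero I le v D -> dichotomy I B G D.
Proof.
apply: bcomb_dichotomy; first exact: ball_directed.
- by move=> g r hg hr; apply: (dichotomy_translate_sub (s := r)) => //; apply: ballG.
- move=> g r hg hr; apply: (dichotomy_translate_sub (s := r)) => // x.
    exact: oballG.
  exact: oball_ball.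
- move=> g hg; apply: (dichotomy_translate_sub (s := v0)) => // [|x -> | x ->]; first exact: Iv0.
    exact: G0.
  by split; [exact: G0 | apply: (le_refl hI); exact: Iv0].
- move=> g hg; apply: (dichotomy_const True) => [|a ga]; first by exists v0; exact: Iv0.
  by rewrite translateE //; split=> // _; split; grp_mem.
Qed.

Lemma bcomb_dichotomy_ball r d D : I r -> lt r v0 -> G d -> bcomb G add zero I le v D ->
  dichotomy (eq r) OB (coset d (B r)) D.
Proof.
move=> hr hr0 hd; have Iv := Iv0.
have le_v0 rho : I rho -> le rho r -> le rho v0.
  by move=> hrho h; apply: (le_trans hI) h (ltW hr0).
have nonempty : exists t, r = t by exists r.
apply: bcomb_dichotomy; first by move=> t1 t2 <- <-; exists r.
- move=> g rho hg hrho; case: (le_or_lt hrho hr) => h.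
    apply: dichotomy_translate_super => //; first exact: (ball_sgrp hrho (le_v0 _ hrho h)).
    by move=> x; apply: ball_mono.
  apply: (dichotomy_translate_sub (s := r)) => // x; first exact: ballG.
  exact: ball_oball.
- move=> g rho hg hrho; case: (le_or_lt hr hrho) => h.
    apply: (dichotomy_translate_sub (s := r)) => // x; first exact: oballG.
    exact: oball_mono.
  apply: dichotomy_translate_super => //.
    by apply: oball_sgrp => //; apply: lt_le_trans h (ltW hr0).
  by move=> x; apply: ball_oball.
- move=> g hg; apply: (dichotomy_translate_sub (s := r)) => // [x -> | x ->]; first exact: G0.
  by split; [exact: G0 | ].
- move=> g hg; apply: dichotomy_translate_super => //; first exact: sgrpG.
  by move=> x; apply: ballG.
Qed.

Definition above (R : list T) r t := (t = v0 \/ List.In t R) /\ lt r t.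

Definition oball_dichotomy (R : list T) (A : X -> Prop) := forall r d, I r -> lt r v0 -> G d ->
  dichotomy (above R r) B (coset d (OB r)) A.

Lemma above_I R r t : (forall t, List.In t R -> I t) -> above R r t -> I t.
Proof. by move=> hR [[-> | /hR] _] //; exact: Iv0. Qed.

Lemma oball_dichotomy_incl R R' A : (forall t, List.In t R -> List.In t R') ->
  oball_dichotomy R A -> oball_dichotomy R' A.
Proof.
move=> hRR' h r d hr hr0 hd; apply: dichotomy_idx (h r d hr hr0 hd).
by move=> t [[-> | /hRR' ?] ?]; split=> //; [left | right].
Qed.

Lemma oball_dichotomy_translate g rho A : G g -> I rho ->
  (forall x, A x <-> translate add g (B rho) x) \/ (forall x, A x <-> translate add g (OB rho) x) ->
  oball_dichotomy [:: rho] A.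
Proof.
move=> hg hrho hA r d hr hr0 hd; have Iv := Iv0.
have nonempty : exists t, above [:: rho] r t by exists v0; split=> //; left.
case: (le_or_lt hrho hr) => h.
  case: hA => hA; apply: dichotomy_ext (fun x => iff_sym (hA x)) _;
    apply: dichotomy_translate_super => //.
  - by apply: ball_sgrp => //; apply: (le_trans hI) h (ltW hr0).
  - by move=> x /oball_ball; apply: ball_mono.
  - by apply: oball_sgrp => //; apply: le_lt_trans h hr0.
  - by move=> x; apply: oball_mono.
have abv : above [:: rho] r rho by split=> //; right; left.
case: hA => hA; apply: dichotomy_ext (fun x => iff_sym (hA x)) _;
  apply: (dichotomy_translate_sub (s := rho)) => // x; try exact: ballG; try exact: oballG.
exact: oball_ball.
Qed.

Lemma bcomb_dichotomy_oball D : bcomb G add zero I le v D ->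
  exists R, (forall t, List.In t R -> I t) /\ oball_dichotomy R D.
Proof.
have Iv := Iv0.
have hdir R r : (forall t, List.In t R -> I t) -> directed (above R r) B.
  by move=> hR; apply: ball_directed => t; apply: above_I.
have app_incl R1 R2 t : List.In t R1 \/ List.In t R2 -> List.In t (R1 ++ R2)%list.
  by move/List.in_app_iff.
have app_I R1 R2 : (forall t, List.In t R1 -> I t) -> (forall t, List.In t R2 -> I t) ->
    forall t, List.In t (R1 ++ R2)%list -> I t.
  by move=> h1 h2 t /List.in_app_iff [/h1 | /h2].
elim=> {D}.
- move=> g rho hg hrho; exists [:: rho]; split=> [t [<- | []] // |].
  by apply: (oball_dichotomy_translate hg hrho); left=> x.
- move=> g rho hg hrho; exists [:: rho]; split=> [t [<- | []] // |].
  by apply: (oball_dichotomy_translate hg hrho); right=> x.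
- move=> g hg; exists nil; split=> // r d hr hr0 hd.
  apply: (dichotomy_translate_sub (s := v0)) => // [|x -> | x ->]; first by split=> //; left.
    exact: G0.
  by split; [exact: G0 | apply: (le_refl hI)].
- move=> g hg; exists nil; split=> // r d hr hr0 hd.
  apply: dichotomy_translate_super => //; first by exists v0; split=> //; left.
    exact: sgrpG.
  by move=> x; apply: oballG.
- by move=> A _ [R [hR h]]; exists R; split=> // r d hr hr0 hd; apply/dichotomy_compl/h.
- move=> A A' _ [R1 [hR1 h1]] _ [R2 [hR2 h2]]; exists (R1 ++ R2)%list.
  split=> [|r d hr hr0 hd]; first exact: app_I.
  apply: dichotomy_union; first exact/hdir/app_I.
    by apply: (oball_dichotomy_incl (R := R1)) => // t ?; apply: app_incl; left.
  by apply: (oball_dichotomy_incl (R := R2)) => // t ?; apply: app_incl; right.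
- move=> A A' _ [R1 [hR1 h1]] _ [R2 [hR2 h2]]; exists (R1 ++ R2)%list.
  split=> [|r d hr hr0 hd]; first exact: app_I.
  apply: dichotomy_inter; first exact/hdir/app_I.
    by apply: (oball_dichotomy_incl (R := R1)) => // t ?; apply: app_incl; left.
  by apply: (oball_dichotomy_incl (R := R2)) => // t ?; apply: app_incl; right.
- move=> A A' _ [R [hR h]] e; exists R; split=> // r d hr hr0 hd.
  by apply: dichotomy_ext e _; apply: h.
Qed.

Definition ball_like (Y : X -> Prop) := Y = G \/ exists r, I r /\ (Y = B r \/ Y = OB r).

Definition difference_ball (E H : X -> Prop) :=
  exists Y, ball_like Y /\ (forall x, Y x -> diffset E x) /\ covered_in H Y.

Lemma ball_like_sgrp Y : ball_like Y -> (exists a, Y a) -> subgroup G add opp zero Y.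
Proof.
case=> [-> _ | [r [hr [-> | ->]]] [a ha]]; first exact: sgrpG.
  exact: ball_sgrp hr (ball_le_v0 hr ha).
exact: oball_sgrp hr (oball_lt_v0 hr ha).
Qed.

Hypothesis hinf : forall r, I r -> lt r v0 -> ~ finite_index add opp (B r) (OB r).

Lemma not_covered_oball r : I r -> lt r v0 -> ~ covered (OB r) (B r).
Proof.
move=> hr hr0 hcov; apply: (hinf hr hr0); apply: finite_index_of_covered_in.
by apply: covered_in_of_covered hcov; [apply: ballG | apply: oball_sgrp].
Qed.

Section Covering.
Variables (E H : X -> Prop).
Hypothesis hEb : bcomb G add zero I le v E.
Hypothesis hH : subgroup G add opp zero H.
Hypothesis hHE : forall x, H x -> E x.

Lemma diffset0 : diffset E zero.
Proof.
have h0 : E zero by apply/hHE/(sgrp0 hH).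
by exists zero, zero; rewrite subgg //; exact: G0.
Qed.

Lemma covered_in_ball s : I s -> covered (B s) H -> covered_in H (B s).
Proof.
move=> hs hcov; have [l [_ /(_ _ (sgrp0 hH)) [c [_ /(ball_le_v0 hs) hle]]]] := hcov.
by apply: covered_in_of_covered hcov; [exact: sgrp_sub | exact: ball_sgrp].
Qed.

Lemma refine_ball_cover r : I r -> covered_in H (B r) ->
  difference_ball E H \/ (lt r v0 /\ covered_in H (OB r)).
Proof.
move=> hr hcov; case: (le_or_lt Iv0 hr) => hle.
  left; exists (B r); split; first by right; exists r; split=> //; left.
  by split=> // x hx; rewrite (ball_v0 hr hle hx); exact: diffset0.
case: (classic (difference_ball E H)) => hD; [by left | right; split=> //].
have sgrpB := ball_sgrp hr (ltW hle).
case: (hcov) => l [hl hc].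
have small_c c : List.In c l -> coset_small (eq r) OB (fun a => coset c (B r) a /\ E a).
  move=> hin; have gc := sgrp_sub hH (hl _ hin).
  case: (bcomb_dichotomy_ball hr hle gc hEb) => // [[t [<- hcovc]]].
  case: hD; exists (B r); split; first by right; exists r; split=> //; left.
  split=> //; apply: (diffset_of_not_covered sgrpB gc _ (not_covered_oball hr hle)).
  by apply: covered_mono hcovc => // a [hx hn]; split=> //; split=> //; case: hx.
have hdir : directed (eq r) OB by move=> t1 t2 <- <-; exists r.
have [t [<- hcovE]] := coset_small_bigunion hdir (ex_intro _ r erefl) small_c.
apply: covered_in_of_covered => //; [exact: sgrp_sub | exact: oball_sgrp |].
apply: covered_mono hcovE => // h hh; case: (hc _ hh) => c [hin hy].
by exists c; do !split=> //; [apply: (sgrp_sub hH) | apply: hHE].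
Qed.

Section Ascent.
Variable R : list T.
Hypothesis hR : forall t, List.In t R -> I t.
Hypothesis hC : oball_dichotomy R E.

Lemma refine_oball_cover r : I r -> lt r v0 -> covered_in H (OB r) ->
  difference_ball E H \/ exists t, above R r t /\ covered_in H (B t).
Proof.
move=> hr hr0 [l [hl hc]].
case: (classic (difference_ball E H)) => hD; [by left | right].
have small_c c : List.In c l -> coset_small (above R r) B (fun a => coset c (OB r) a /\ E a).
  move=> hin; have gc := sgrp_sub hH (hl _ hin).
  case: (hC hr hr0 gc) => // [[t [ht hcovc]]].
  exists t; split=> //.
  case: (classic (covered (B t) (OB r))) => [hcov | hncov].
    by apply: covered_mono (covered_coset gc hcov) => // a [].
  case: hD; exists (OB r); split; first by right; exists r; split=> //; right.
  split; last by exists l.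
  apply: (diffset_of_not_covered (oball_sgrp hr hr0) gc _ hncov).
  by apply: covered_mono hcovc => // a [hx hn]; split=> //; split=> //; case: hx.
have hdir : directed (above R r) B by apply: ball_directed => t; apply: above_I.
have [t [ht hcovE]] :=
  coset_small_bigunion hdir (ex_intro _ v0 (conj (or_introl erefl) hr0)) small_c.
exists t; split=> //; apply: covered_in_ball; first exact: above_I hR ht.
apply: covered_mono hcovE => // h hh; case: (hc _ hh) => c [hin hy].
by exists c; do !split=> //; [apply: (sgrp_sub hH) | apply: hHE].
Qed.

(* Each refinement step strictly increases the radius within the finite list [v0 :: R]. *)
Definition rank r := count (fun t => asbool (I t /\ lt r t)) (v0 :: R).

Lemma rank_above r t : I r -> above R r t -> (rank t < rank r)%N.
Proof.
move=> hr ht; have It := above_I hR ht; case: ht => hin hrt.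
apply: count_lt_subpred => [x /asboolP [Ix htx] | ].
  by apply/asboolP; split=> //; apply: le_lt_trans (ltW hrt) htx.
apply: (has_In (x := t)); first by case: hin => [-> | ?]; [left | right].
by apply/andP; split; [apply/asboolP => [[_ []]] | apply/asboolP].
Qed.

Lemma ascent N r : I r -> (rank r < N)%N -> covered_in H (B r) -> difference_ball E H.
Proof.
elim: N r => [// | N IH] r hr hN hcov.
case: (refine_ball_cover hr hcov) => [// | [hr0 hcovo]].
case: (refine_oball_cover hr hr0 hcovo) => [// | [t [ht hcovt]]].
by apply: (IH t (above_I hR ht)) hcovt; apply: leq_trans (rank_above hr ht) _.
Qed.
End Ascent.

Lemma initial_cover : difference_ball E H \/ exists s, I s /\ covered_in H (B s).
Proof.
have HG := sgrp_sub hH.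
case: (bcomb_dichotomy_G hEb) => [[s [hs hcov]] | [s [hs hcov]]].
  right; exists s; split=> //; apply: covered_in_ball => //.
  by apply: covered_mono hcov => // h hh; split; [apply: HG | apply: hHE].
case: (classic (covered (B s) G)) => [hcovG | hncov].
  by right; exists s; split=> //; apply: covered_in_ball => //; apply: covered_mono hcovG.
left; exists G; split; first by left.
split.
  by apply: (diffset_of_not_covered sgrpG G0 _ hncov); apply: covered_mono hcov => // a [[]].
exists [:: zero]; split=> [c [<- | []] | h hh]; first exact: (sgrp0 hH).
by exists zero; split; [left | rewrite subg0; apply: HG].
Qed.

Lemma difference_ball_of_bcomb : difference_ball E H.
Proof.
have [R [hR hC]] := bcomb_dichotomy_oball hEb.
case: initial_cover => [// | [s [hs hcov]]].
exact: (ascent hR hC (N := (rank R s).+1) hs).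
Qed.
End Covering.

End Valuation.
End CommGroup.

Section Definability.
Variables (M : Type) (Def : forall n, (tup M n -> Prop) -> Prop).
Arguments Def : clear implicits.
Hypothesis hstr : is_structure Def.

Definition tcat k p (x : tup M k) (y : tup M p) : tup M (k + p) :=
  fun i => match split i with inl a => x a | inr b => y b end.

Lemma lpart_tcat k p (x : tup M k) (y : tup M p) : lpart (tcat x y) = x.
Proof. by apply: functional_extensionality => a; rewrite /lpart /tcat (unsplitK (inl a)). Qed.

Lemma rpart_tcat k p (x : tup M k) (y : tup M p) : rpart (tcat x y) = y.
Proof. by apply: functional_extensionality => a; rewrite /rpart /tcat (unsplitK (inr a)). Qed.

Lemma tcat_parts k p (z : tup M (k + p)) : tcat (lpart z) (rpart z) = z.
Proof.
apply: functional_extensionality => i; rewrite /tcat.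
by case: (split i) (splitK i) => a <-.
Qed.

Lemma def_or k (A A' : tup M k -> Prop) : Def k A -> Def k A' -> Def k (fun x => A x \/ A' x).
Proof.
move=> hA hA'; apply: (def_ext hstr (A := fun x => ~ (~ A x /\ ~ A' x))).
  by move=> x; split=> [/not_and_or [] /NNPP | [] h []]; [left | right | |].
by apply/(def_C hstr)/(def_I hstr); apply: (def_C hstr).
Qed.

Lemma def_imply k (A A' : tup M k -> Prop) : Def k A -> Def k A' -> Def k (fun x => A x -> A' x).
Proof.
move=> hA hA'; apply: (def_ext hstr (A := fun x => ~ (A x /\ ~ A' x))).
  by move=> x; split=> [h ha | h [ha]]; [apply: NNPP => hn; apply: h | apply; apply: h].
by apply/(def_C hstr)/(def_I hstr) => //; apply: (def_C hstr).
Qed.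

Lemma def_forall_ord p k (P : 'I_k -> tup M p -> Prop) : (forall i, Def p (P i)) ->
  Def p (fun x => forall i, P i x).
Proof.
elim: k P => [|k IH] P hP.
  by apply: (def_ext hstr) (def_T hstr p) => x; split=> // _ [].
apply: (def_ext hstr (A := fun x => P ord0 x /\ forall j : 'I_k, P (lift ord0 j) x)).
  move=> x; split=> [[h0 hj] i | h]; last by split=> // j; apply: h.
  by case: (unliftP ord0 i) => [j -> | ->].
by apply: (def_I hstr) => //; apply: IH.
Qed.

Lemma def_point k (c : tup M k) : Def k (fun x => x = c).
Proof.
apply: (def_ext hstr (A := fun x => forall i, x i = c i)).
  by move=> x; split=> [h | -> //]; apply: functional_extensionality.
by apply: def_forall_ord => i; apply: (def_const hstr).
Qed.

Lemma def_exists k p (A : tup M (k + p) -> Prop) : Def (k + p) A ->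
  Def k (fun x => exists y, A (tcat x y)).
Proof.
move=> h; apply: (def_ext hstr) (def_proj hstr h) => x; split.
  by case=> z [<- hz]; exists (rpart z); rewrite tcat_parts.
by case=> y hy; exists (tcat x y); rewrite lpart_tcat.
Qed.

Lemma def_fix k p (A : tup M (k + p) -> Prop) c : Def (k + p) A ->
  Def k (fun x => A (tcat x c)).
Proof.
move=> h; have hc : Def (k + p) (fun w => rpart w = c).
  exact: (def_subst hstr (fun i => rshift k i) (def_point c)).
apply: (def_ext hstr) (def_exists (def_I hstr hc h)) => x.
by split=> [[y []] | hx]; [rewrite rpart_tcat => -> | exists c; rewrite rpart_tcat].
Qed.

Definition ipair k p N (f : 'I_k -> 'I_N) (g : 'I_p -> 'I_N) : 'I_(k + p) -> 'I_N :=
  fun i => match split i with inl a => f a | inr b => g b end.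

Lemma lpart_ipair k p N (f : 'I_k -> 'I_N) (g : 'I_p -> 'I_N) (Z : tup M N) :
  lpart (fun i => Z (ipair f g i)) = (fun i => Z (f i)).
Proof. by apply: functional_extensionality => a; rewrite /lpart /ipair (unsplitK (inl a)). Qed.

Lemma rpart_ipair k p N (f : 'I_k -> 'I_N) (g : 'I_p -> 'I_N) (Z : tup M N) :
  rpart (fun i => Z (ipair f g i)) = (fun i => Z (g i)).
Proof. by apply: functional_extensionality => a; rewrite /rpart /ipair (unsplitK (inr a)). Qed.

Lemma def2_pull k p N (f : 'I_k -> 'I_N) (g : 'I_p -> 'I_N) R : Def2 Def R ->
  Def N (fun Z => R (fun i => Z (f i)) (fun i => Z (g i))).
Proof.
move=> h; apply: (def_ext hstr) (def_subst hstr (ipair f g) h) => Z.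
by rewrite lpart_ipair rpart_ipair.
Qed.

Lemma def3_pull k p q N (f : 'I_k -> 'I_N) (g : 'I_p -> 'I_N) (h : 'I_q -> 'I_N) R :
  Def3 Def R -> Def N (fun Z => R (fun i => Z (f i)) (fun i => Z (g i)) (fun i => Z (h i))).
Proof.
move=> hR; apply: (def_ext hstr) (def_subst hstr (ipair (ipair f g) h) hR) => Z.
by rewrite lpart_ipair rpart_ipair lpart_ipair rpart_ipair.
Qed.

Lemma def2_exists k p (R : tup M k -> tup M p -> Prop) : Def2 Def R ->
  Def k (fun x => exists y, R x y).
Proof.
move=> h; apply: (def_ext hstr) (def_exists h) => x.
by split=> [[y hy] | [y hy]]; exists y; move: hy => /=; rewrite lpart_tcat rpart_tcat.
Qed.

Lemma def2_swap k p (R : tup M k -> tup M p -> Prop) : Def2 Def R ->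
  Def2 Def (fun y x => R x y).
Proof. exact: (def2_pull (fun i => rshift p i) (fun i => lshift k i)). Qed.

Lemma def2_right k p (A : tup M p -> Prop) : Def p A -> Def2 Def (fun (_ : tup M k) y => A y).
Proof. exact: (def_subst hstr (fun i => rshift k i)). Qed.

Lemma def2_sectionr k p (R : tup M k -> tup M p -> Prop) c : Def2 Def R ->
  Def k (fun x => R x c).
Proof. by move/(def_fix c); apply: (def_ext hstr) => x; rewrite lpart_tcat rpart_tcat. Qed.

Lemma def2_sectionl k p (R : tup M k -> tup M p -> Prop) c : Def2 Def R ->
  Def p (fun y => R c y).
Proof. by move/def2_swap; apply: def2_sectionr. Qed.

Lemma def3_sectionl k p q (R : tup M k -> tup M p -> tup M q -> Prop) c : Def3 Def R ->
  Def2 Def (fun y z => R c y z).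
Proof.
move=> /(def3_pull (fun i => rshift (p + q) i) (fun i => lshift k (lshift q i))
  (fun i => lshift k (rshift p i))) /(def_fix c).
apply: (def_ext hstr) => w.
change (R (rpart (tcat w c)) (lpart (lpart (tcat w c))) (rpart (lpart (tcat w c)))
  <-> R c (lpart w) (rpart w)).
by rewrite lpart_tcat rpart_tcat.
Qed.

Lemma saturated_compactness K k (J : Type) (F : J -> tup M k -> Prop) (D : tup M k -> Prop) :
  saturated K Def -> small K J -> (forall j, Def k (F j)) -> Def k D ->
  (forall x, (forall j, F j x) -> D x) ->
  exists N (f : 'I_N -> J), forall x, (forall i, F (f i) x) -> D x.
Proof.
move=> hsat hJ hF hD hFD; apply: NNPP => hfin.
case: (classic (exists j : J, True)) => [[j0 _] | hJ0]; last first.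
  have f0 : 'I_0 -> J by case=> i; rewrite ltn0.
  apply: hfin; exists 0, f0 => x _.
  by apply: hFD => j; case: hJ0; exists j.
have [x hx] : exists x, forall j, F j x /\ ~ D x.
  apply: (hsat _ _ _ hJ) => [j | N f]; first by apply: (def_I hstr) => //; apply: (def_C hstr).
  apply: NNPP => hno; apply: hfin; exists N, f => x hx; apply: NNPP => hnD.
  by apply: hno; exists x => i; split.
by case: (hx j0) => _; apply; apply: hFD => j; case: (hx j).
Qed.
End Definability.

Section DefinableSubgroups.
Variables (K M : Type) (Def : forall n, (tup M n -> Prop) -> Prop).
Arguments Def : clear implicits.
Hypothesis hstr : is_structure Def.
Variables (n m : nat) (G : tup M n -> Prop) (add : tup M n -> tup M n -> tup M n)
  (opp : tup M n -> tup M n) (zero : tup M n).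
Hypothesis hG : is_comm_group G add opp zero.
Hypothesis hGdef : Def n G.
Hypothesis haddef : Def3 Def (fun a b c => G a /\ G b /\ c = add a b).
Variables (I : tup M m -> Prop) (le : tup M m -> tup M m -> Prop) (v : tup M n -> tup M m).
Hypothesis hI : is_total_order I le.
Hypothesis hledef : Def2 Def (fun r s => I r /\ I s /\ le r s).
Hypothesis hvI : forall a, G a -> I (v a).
Hypothesis hvdef : Def2 Def (fun a r => G a /\ r = v a).

Local Notation X := (tup M n).
Local Notation sgrp := (subgroup G add opp zero).
Local Notation B := (ball G le v).
Local Notation OB := (oball G le v).

Lemma def_ball r : I r -> Def n (B r).
Proof.
move=> hr; have hL := def2_right hstr n (def2_sectionl hstr r hledef).
have hV : Def2 Def (fun a s => (G a /\ s = v a) /\ (I r /\ I s /\ le r s)) := def_I hstr hvdef hL.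
apply: (def_ext hstr) (def2_exists hstr hV) => a; split.
  by case=> s [[ga ->] [_ [_ h]]].
by case=> ga h; exists (v a); do !split=> //; apply: hvI.
Qed.

Lemma def_oball r : I r -> Def n (OB r).
Proof.
move=> hr; have := def_I hstr (def_ball hr) (def_C hstr (def2_sectionr hstr r hvdef)).
apply: (def_ext hstr) => a; split=> [[[ga h] hne] | [ga [h hne]]].
  by split=> //; split=> // e; apply: hne; split=> //; rewrite e.
by split=> [// | [_ e]]; apply: hne.
Qed.

Lemma def_coset (Y : X -> Prop) c : G c -> Def n Y -> Def n (coset G add opp c Y).
Proof.
move=> gc hY; have hA := def2_swap hstr (def3_sectionl hstr c haddef).
have hV : Def2 Def (fun a y => (G c /\ G y /\ a = add c y) /\ Y y).
  exact: (def_I hstr hA (def2_right hstr n hY)).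
apply: (def_ext hstr) (def2_exists hstr hV) => a; split.
  by case=> y [[_ [gy ->]] hy]; split; [apply: (GD hG) | rewrite (subg_addl hG)].
case=> ga hy; exists (subg add opp a c); split=> //.
by do !split=> //; [apply: (GB hG) | rewrite (addg_subK hG)].
Qed.

Lemma def_coset_union (Y : X -> Prop) l : (forall c, List.In c l -> G c) -> Def n Y ->
  Def n (fun x => exists c, List.In c l /\ coset G add opp c Y x).
Proof.
move=> + hY; elim: l => [_ | c l IH hl].
  by apply: (def_ext hstr) (def_C hstr (def_T hstr n)) => x; split=> // [[c [[]]]].
apply: (def_ext hstr) (def_or hstr (def_coset (hl c (or_introl erefl)) hY)
  (IH (fun c' h => hl c' (or_intror h)))) => x.
split=> [[hx | [c' [hin hx]]] | [c' [[<- | hin] hx]]].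
- by exists c; split=> //; left.
- by exists c'; split=> //; right.
- by left.
- by right; exists c'.
Qed.


Lemma def_ball_like Y : ball_like G I le v Y -> Def n Y.
Proof. by case=> [-> // | [r [hr [-> | ->]]]]; [apply: def_ball | apply: def_oball]. Qed.

Hypothesis hvadd : forall a b, G a -> G b -> le (v a) (v (add a b)) \/ le (v b) (v (add a b)).
Hypothesis hvopp : forall a, G a -> v (opp a) = v a.
Hypothesis hvmax : forall a, G a -> le (v a) (v zero).
Hypothesis hv0 : forall a, G a -> v a = v zero -> a = zero.
Hypothesis hbc : forall D : X -> Prop, Def n D -> (forall x, D x -> G x) ->
  bcomb G add zero I le v D.
Hypothesis hinf : forall r, I r -> lt_of le r (v zero) -> ~ finite_index add opp (B r) (OB r).

Lemma definable_difference_ball E H : Def n E -> (forall x, E x -> G x) -> sgrp H ->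
  (forall x, H x -> E x) -> difference_ball G add opp I le v E H.
Proof.
move=> hE hEG.
exact: (difference_ball_of_bcomb hG hI hvI hvadd hvopp hvmax hv0 hinf (hbc hE hEG)).
Qed.

Lemma definable_subgroup_classification H : sgrp H -> Def n H ->
  (forall x, H x <-> G x) \/
  exists r, I r /\
    (((forall x, B r x -> H x) /\ finite_index add opp H (B r)) \/
     ((forall x, OB r x -> H x) /\ finite_index add opp H (OB r))).
Proof.
move=> hH hD; have HG := sgrp_sub hH.
have [Y [hY [hYH hcov]]] := definable_difference_ball hD HG hH (fun x h => h).
have YH x : Y x -> H x by move/hYH/(sgrp_diffset hH).
have hfin := finite_index_of_covered_in zero hcov.
case: hY => [hYG | [r [hr [hYB | hYB]]]]; subst Y.
- by left=> x; split=> [/HG | /YH].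
- by right; exists r; split=> //; left.
- by right; exists r; split=> //; right.
Qed.

Hypothesis hsat : saturated K Def.

Section SumDifference.
Let N5 := n + n + n + n + n.
Let ix (i : 'I_n) : 'I_N5 := lshift n (lshift n (lshift n (lshift n i))).
Let iy (i : 'I_n) : 'I_N5 := lshift n (lshift n (lshift n (rshift n i))).
Let iz (i : 'I_n) : 'I_N5 := lshift n (lshift n (rshift (n + n) i)).
Let iw (i : 'I_n) : 'I_N5 := lshift n (rshift (n + n + n) i).
Let iu (i : 'I_n) : 'I_N5 := rshift (n + n + n + n) i.
Let px (Z : tup M N5) : X := lpart (lpart (lpart (lpart Z))).
Let py (Z : tup M N5) : X := rpart (lpart (lpart (lpart Z))).
Let pz (Z : tup M N5) : X := rpart (lpart (lpart Z)).
Let pw (Z : tup M N5) : X := rpart (lpart Z).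
Let pu (Z : tup M N5) : X := rpart Z.

(* Compactness for the condition "x, y, z in H implies x + y - z in D", where x + y - z = w
   is expressed through the graph of [add] as x + y = u = w + z. *)
Lemma sumdiff_nbhd (H : X -> Prop) (J : Type) (Dj : J -> X -> Prop) D : sgrp H -> small K J ->
  (forall j, Def n (Dj j)) -> (forall x, H x <-> forall j, Dj j x) ->
  Def n D -> (forall x, H x -> D x) ->
  exists E, Def n E /\ (forall x, E x -> G x) /\ (forall x, H x -> E x) /\
    forall x y z, E x -> E y -> E z -> D (subg add opp (add x y) z).
Proof.
move=> hH hJ hDj hHDj hD hHD.
pose F j Z := Dj j (px Z) /\ Dj j (py Z) /\ Dj j (pz Z).
pose Add a b c := G a /\ G b /\ c = add a b.
pose D' Z := Add (px Z) (py Z) (pu Z) /\ Add (pw Z) (pz Z) (pu Z) -> D (pw Z).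
have hF j : Def N5 (F j).
  apply: (def_I hstr); first exact: (def_subst hstr ix (hDj j)).
  by apply: (def_I hstr); [exact: (def_subst hstr iy (hDj j)) | exact: (def_subst hstr iz (hDj j))].
have hD' : Def N5 D'.
  apply: (def_imply hstr); last exact: (def_subst hstr iw hD).
  apply: (def_I hstr); first exact: (def3_pull hstr ix iy iu haddef).
  exact: (def3_pull hstr iw iz iu haddef).
have [N [f hf]] : exists N (f : 'I_N -> J), forall Z, (forall i, F (f i) Z) -> D' Z.
  apply: (saturated_compactness hstr hsat hJ hF hD') => Z hZ [[gx [gy ->]] [gw [gz e]]].
  have inH (p : tup M N5 -> X) : (forall j, Dj j (p Z)) -> H (p Z) by move=> h; apply/hHDj.
  apply: hHD; rewrite -(subg_addr hG gw gz) -e.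
  apply: (sgrpB hH); [apply: (sgrpD hH) |]; apply: inH => j; by case: (hZ j) => [? [? ?]].
exists (fun x => G x /\ forall i, Dj (f i) x); split.
  by apply: (def_I hstr) => //; apply: (def_forall_ord hstr) => i; apply: hDj.
split=> [x [] // | ]; split=> [x hx | x y z [gx hx] [gy hy] [gz hz]].
  by split; [exact: (sgrp_sub hH) | move/hHDj: hx].
have gw : G (subg add opp (add x y) z) by apply: (GB hG) => //; apply: (GD hG).
have := hf (tcat (tcat (tcat (tcat x y) z) (subg add opp (add x y) z)) (add x y)).
rewrite /D' /F /px /py /pz /pw /pu !lpart_tcat !rpart_tcat; apply=> [i | ]; first by [].
have gxy : G (add x y) by apply: (GD hG).
by do !split=> //; rewrite [add _ z](addgC hG) // (addg_subK hG).
Qed.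
End SumDifference.

Lemma definable_subgroup_between (H : X -> Prop) (J : Type) (Dj : J -> X -> Prop) D :
  sgrp H -> small K J -> (forall j, Def n (Dj j)) -> (forall x, H x <-> forall j, Dj j x) ->
  Def n D -> (forall x, H x -> D x) ->
  exists S, (Def n S /\ sgrp S) /\ (forall x, H x -> S x) /\ (forall x, S x -> D x).
Proof.
move=> hH hJ hDj hHDj hD hHD.
have [E [hE [hEG [hHE hsumdiff]]]] := sumdiff_nbhd hH hJ hDj hHDj hD hHD.
have [Y [hY [hYE hcov]]] := definable_difference_ball hE hEG hH hHE.
have hYs : sgrp Y.
  apply: (ball_like_sgrp hG hI hvI hvadd hvopp hvmax hY).
  by case: hcov => l [_ /(_ _ (sgrp0 hH)) [c [_ hy]]]; exists (subg add opp zero c).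
have [l [hl hS]] := sumset_covered_in hG hH hYs hcov.
exists (sumset add H Y); split; [split | split].
- by apply: (def_ext hstr) (def_coset_union hl (def_ball_like hY)) => x; apply: iff_sym.
- exact: (sgrp_sumset hG).
- move=> x hx; exists x, zero; split=> //; split; first exact: (sgrp0 hYs).
  by rewrite (addg0 hG) //; apply: (sgrp_sub hH).
move=> x [h [y [hh [/hYE [e1 [e2 [h1 [h2 ->]]]] ->]]]].
have := hsumdiff _ _ _ (hHE _ hh) h1 h2.
have [gh g1 g2] := And3 (hEG _ (hHE _ hh)) (hEG _ h1) (hEG _ h2).
by rewrite /subg (addgA hG) //; apply: (GN hG).
Qed.

Lemma type_definable_subgroup_meet (H : X -> Prop) : sgrp H -> type_definable K Def H ->
  exists (J : Type) (S : J -> X -> Prop),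
    small K J /\ (forall j, Def n (S j) /\ sgrp (S j)) /\ (forall x, H x <-> forall j, S j x).
Proof.
move=> hH [J [Dj [hJ [hDj hHDj]]]].
have hS j : exists S, (Def n S /\ sgrp S) /\ (forall x, H x -> S x) /\ (forall x, S x -> Dj j x).
  by apply: (definable_subgroup_between hH hJ hDj hHDj (hDj j)) => x /hHDj.
pose S j := proj1_sig (constructive_indefinite_description _ (hS j)).
have SP j : (Def n (S j) /\ sgrp (S j)) /\ (forall x, H x -> S j x) /\ (forall x, S j x -> Dj j x).
  exact: proj2_sig (constructive_indefinite_description _ (hS j)).
exists J, S; split=> //; split=> [j | x]; first by case: (SP j).
split=> [hx j | hx]; first by case: (SP j) => _ [/(_ x hx)].
by apply/hHDj => j; case: (SP j) => _ [_]; apply.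
Qed.
End DefinableSubgroups.

Theorem lemma3p7
  (K M : Type) (Def : forall n, (tup M n -> Prop) -> Prop)
  (hstr : is_structure Def) (hK : uncountable K) (hsat : saturated K Def)
  (n m : nat)
  (G : tup M n -> Prop) (add : tup M n -> tup M n -> tup M n)
  (opp : tup M n -> tup M n) (zero : tup M n)
  (hG : is_comm_group G add opp zero)
  (hGdef : Def n G)
  (haddef : Def3 Def (fun a b c => G a /\ G b /\ c = add a b))
  (I : tup M m -> Prop) (le : tup M m -> tup M m -> Prop)
  (hI : is_total_order I le) (hIdef : Def m I)
  (hledef : Def2 Def (fun r s => I r /\ I s /\ le r s))
  (v : tup M n -> tup M m)
  (hvI : forall a, G a -> I (v a))
  (hvdef : Def2 Def (fun a r => G a /\ r = v a))
  (hvadd : forall a b, G a -> G b -> le (v a) (v (add a b)) \/ le (v b) (v (add a b)))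
  (hvopp : forall a, G a -> v (opp a) = v a)
  (hvmax : forall a, G a -> le (v a) (v zero))
  (hv0 : forall a, G a -> v a = v zero -> a = zero)
  (hbc : forall D : tup M n -> Prop, Def n D -> (forall x, D x -> G x) ->
           bcomb G add zero I le v D)
  (hinf : forall r, I r -> lt_of le r (v zero) ->
           ~ finite_index add opp (ball G le v r) (oball G le v r)) :
  (forall H : tup M n -> Prop, subgroup G add opp zero H -> type_definable K Def H ->
     exists (J : Type) (S : J -> tup M n -> Prop),
       small K J /\ (forall j, Def n (S j) /\ subgroup G add opp zero (S j)) /\
       (forall x, H x <-> forall j, S j x))
  /\
  (forall H : tup M n -> Prop, subgroup G add opp zero H -> Def n H ->
     finite_pred H \/ (forall x, H x <-> G x) \/
     exists r, I r /\
       (((forall x, ball G le v r x -> H x) /\ finite_index add opp H (ball G le v r)) \/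
        ((forall x, oball G le v r x -> H x) /\ finite_index add opp H (oball G le v r)))).
Proof.
split=> H hH hdef.
- exact: (type_definable_subgroup_meet hstr hG hGdef haddef hI hledef hvI hvdef
    hvadd hvopp hvmax hv0 hbc hinf hsat hH hdef).
- (* A finite subgroup falls under the last case with r = v zero, where the ball is {0}. *)
  right; exact: (definable_subgroup_classification hG hI hvI hvadd hvopp hvmax hv0 hbc hinf
    hH hdef).
Qed.
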